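(* Consider the SBCM described in the context with parameters $\gamma>0$ and $\delta\ge 0$, and let $\mathbf{x}$ be a steady state. Suppose there exists a persuadable node $i\in\mathcal{P}$ such that $$(1-w_{ij})(x_j-x_i)^2>\frac{1}{2\gamma}\quad\text{for all } j\sim i,$$ where $w_{ij}=w(x_i,x_j)$. Then the matrix $\mathbf{J}_{\mathcal{P}}$ (and hence the Jacobian matrix $\mathbf{J}$ of $\mathbf{F}$) evaluated at $\mathbf{x}$ has at least one strictly positive eigenvalue.
   Context: Let $\mathcal{G}$ be a finite undirected unweighted graph without self-loops, with node set $\mathcal{N}$; write $i\sim j$ if nodes $i,j$ are adjacent. The node set is partitioned into a set $\mathcal{Z}$ of zealots and a set $\mathcal{P}=\mathcal{N}\setminus\mathcal{Z}$ of persuadable nodes; every persuadable node is assumed to have at least one neighbor. Fix $\gamma,\delta\ge 0$. The influence function is $w(x_i,x_j)=\frac{1}{1+e^{\gamma(x_i-x_j)^2-\gamma\delta}}$ if $i\sim j$ and $w(x_i,x_j)=0$ otherwise. For an opinion vector $\mathbf{x}\in\mathbb{R}^{\mathcal{N}}$, the sigmoidal bounded-confidence model (SBCM) is $\frac{dx_i}{dt}=f_i(\mathbf{x})$, where $f_i(\mathbf{x})=\frac{\sum_j w(x_i,x_j)(x_j-x_i)}{\sum_j w(x_i,x_j)}$ for $i\in\mathcal{P}$ and $f_i(\mathbf{x})=0$ for $i\in\mathcal{Z}$; $\mathbf{F}=(f_i)_i$. A steady state is an $\mathbf{x}$ with $\mathbf{F}(\mathbf{x})=\mathbf{0}$. $\mathbf{J}$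 denotes the Jacobian matrix of $\mathbf{F}$ and $\mathbf{J}_{\mathcal{P}}$ its submatrix of entries $\partial f_i/\partial x_j$ with $i,j\in\mathcal{P}$. *)

From HB Require Import structures.
From mathcomp Require Import all_boot all_order all_algebra.
From mathcomp Require Import all_classical all_reals all_analysis.
Set Implicit Arguments. Unset Strict Implicit. Unset Printing Implicit Defensive.
Import Order.TTheory GRing.Theory Num.Theory.
Local Open Scope ring_scope.

Section SBCM.
Variables (R : realType) (T : finType).

Definition sig_w (gam del : R) (xi xj : R) : R :=
  1 / (1 + expR (gam * (xi - xj) ^+ 2 - gam * del)).

Definition infl (e : rel T) (gam del : R) (x : T -> R) (i j : T) : R :=
  if e i j then sig_w gam del (x i) (x j) else 0.

(* Right-hand side f_i of the SBCM; zealots Z have f_i = 0. *)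
Definition sbcm_f (e : rel T) (Z : {set T}) (gam del : R) (x : T -> R) (i : T) : R :=
  if i \in Z then 0
  else (\sum_(j : T) infl e gam del x i j * (x j - x i))
       / (\sum_(j : T) infl e gam del x i j).

Definition steady_state e Z gam del (x : T -> R) : Prop :=
  forall i, sbcm_f e Z gam del x i = 0.

Definition upd (x : T -> R) (j : T) (t : R) : T -> R :=
  fun k => if k == j then t else x k.

Definition sbcm_partial e Z gam del (x : T -> R) (i j : T) : R :=
  derive1 (fun t => sbcm_f e Z gam del (upd x j t) i) (x j).

Definition sbcm_J e Z gam del (x : T -> R) : 'M[R]_#|T| :=
  \matrix_(a, b) sbcm_partial e Z gam del x (enum_val a) (enum_val b).

(* Submatrix J_P over persuadable nodes P = ~: Z, indexed through enum_val. *)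
Definition sbcm_JP e (Z : {set T}) gam del (x : T -> R) : 'M[R]_#|~: Z| :=
  \matrix_(a, b) sbcm_partial e Z gam del x
     (enum_val (A := ~: Z) a) (enum_val (A := ~: Z) b).

End SBCM.

From HB Require Import structures.
From mathcomp Require Import all_boot all_order all_algebra.
From mathcomp Require Import all_classical all_reals all_analysis.
From mathcomp Require Import ring lra.
Import Order.TTheory GRing.Theory Num.Theory.
Import numFieldNormedType.Exports.
Local Open Scope ring_scope.

(* At a steady state the numerator sum_j w_ij (x_j - x_i) of f_i vanishes, so
   d f_i / d x_j is the derivative of that numerator divided by
   S_i = sum_j w_ij.  With phi(u) = w(u) u this reads J_P = - S^-1 L, where L
   is the graph Laplacian with the symmetric edge weights phi'(x_j - x_i); in
   particular S J_P is symmetric.  The hypothesis at node i says precisely that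
   phi'(x_j - x_i) < 0 for every neighbour j, hence (J_P)_ii > 0.
   If D is a positive diagonal matrix with D J symmetric and J_ii > 0, then J
   has a positive eigenvalue: the maximum m of v D J v^T on the compact
   ellipsoid v D v^T = 1 is at least J_ii, and at a maximiser c the form of
   m D - D J is positive semidefinite and vanishes at c, so (c D) J = m (c D).
   Finally the rows of J at zealots vanish, so a left eigenvector of J_P for a
   nonzero eigenvalue extends to one of J. *)

Local Open Scope classical_set_scope.

Lemma continuous_sum (R : numFieldType) (T : topologicalType) (I : Type)
    (r : seq I) (F : I -> T -> R) :
  (forall i, continuous (F i)) -> continuous (fun x => \sum_(i <- r) F i x).
Proof.
move=> cF; rewrite -fct_sumE.
elim/big_ind : _ => // [|f g cf cg x]; first exact: cst_continuous.
exact: continuousD (cf x) (cg x).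
Qed.

Section Rayleigh.
Context {R : realType} {n : nat}.

Definition bform (A : 'M[R]_n) (v w : 'rV[R]_n) : R := (v *m A *m w^T) 0 0.

Lemma bformE A v w : bform A v w = \sum_a \sum_b v 0 a * A a b * w 0 b.
Proof.
rewrite /bform mxE [RHS]exchange_big; apply: eq_bigr => b _.
by rewrite !mxE mulr_suml.
Qed.

Lemma bform_sym A v w : A^T = A -> bform A v w = bform A w v.
Proof.
move=> sA; rewrite /bform.
have -> : (v *m A *m w^T) 0 0 = (v *m A *m w^T)^T 0 0 by rewrite [RHS]mxE.
by rewrite !trmx_mul trmxK sA mulmxA.
Qed.

Lemma bformDl A u v w : bform A (u + v) w = bform A u w + bform A v w.
Proof. by rewrite /bform !mulmxDl mxE. Qed.

Lemma bformDr A u v w : bform A u (v + w) = bform A u v + bform A u w.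
Proof. by rewrite /bform linearD /= mulmxDr mxE. Qed.

Lemma bformZl A k v w : bform A (k *: v) w = k * bform A v w.
Proof. by rewrite /bform -!scalemxAl mxE. Qed.

Lemma bformZr A k v w : bform A v (k *: w) = k * bform A v w.
Proof. by rewrite /bform linearZ /= -scalemxAr mxE. Qed.

Lemma bform_linear_mx k A B v w : bform (k *: A - B) v w = k * bform A v w - bform B v w.
Proof. by rewrite /bform mulmxBr mulmxBl -scalemxAr -scalemxAl !mxE. Qed.

Lemma bform_delta_r A v b : bform A v (delta_mx 0 b) = (v *m A) 0 b.
Proof. by rewrite /bform trmx_delta -colE mxE. Qed.

Lemma bform_diag (d : 'rV[R]_n) v w :
  bform (diag_mx d) v w = \sum_a d 0 a * v 0 a * w 0 a.
Proof.
rewrite /bform mul_mx_diag mxE; apply: eq_bigr => a _; rewrite !mxE; ring.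
Qed.

Lemma bform_kernel {A c} :
  A^T = A -> (forall w, 0 <= bform A w w) -> bform A c c = 0 -> c *m A = 0.
Proof.
move=> sA psd cc0; apply/rowP => b; rewrite -bform_delta_r [RHS]mxE.
set w := delta_mx 0 b; set B := bform A c w; set P := bform A w w.
have P0 : 0 <= P := psd w.
have P1 : 0 < P + 1 by rewrite ltr_wpDl.
pose t := - B / (P + 1).
have := psd (c + t *: w).
rewrite !(bformDl, bformDr, bformZl, bformZr) cc0 (bform_sym A w c sA) -/B -/P.
have -> : 0 + t * B + (t * B + t * (t * P)) = - (B ^+ 2 * (P + 2)) / (P + 1) ^+ 2.
  by rewrite /t; field; rewrite gt_eqF.
rewrite pmulr_lge0 ?invr_gt0 ?exprn_gt0 // oppr_ge0 pmulr_lle0 ?sqrf_eq0; last first.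
  by rewrite ltr_wpDl.
by move=> B2le0; apply/eqP; rewrite -sqrf_eq0 eq_le B2le0 sqr_ge0.
Qed.

Lemma bform_scale A k v : bform A (k *: v) (k *: v) = k ^+ 2 * bform A v v.
Proof. by rewrite bformZl bformZr mulrA expr2. Qed.

Lemma continuous_bform A : continuous (fun v => bform A v v).
Proof.
rewrite (funext (fun v => bformE A v v)).
apply: continuous_sum => a; apply: continuous_sum => b v.
apply: (continuousM (s := fun v : 'rV[R]_n => v 0 a * A a b) (t := fun v => v 0 b));
  last exact: coord_continuous.
apply: (continuousM (s := fun v : 'rV[R]_n => v 0 a) (t := fun=> A a b)).
  exact: coord_continuous.
exact: cst_continuous.
Qed.

Section DiagonalForm.
Variable d : 'rV[R]_n.
Hypothesis d_gt0 : forall a, 0 < d 0 a.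

Let term_ge0 (v : 'rV[R]_n) a : 0 <= d 0 a * v 0 a * v 0 a.
Proof. by rewrite -mulrA -expr2 mulr_ge0 ?sqr_ge0 // ltW. Qed.

Lemma bform_diag_ge0 v : 0 <= bform (diag_mx d) v v.
Proof. by rewrite bform_diag; apply: sumr_ge0 => a _; apply: term_ge0. Qed.

Lemma bform_diag_eq0 v : bform (diag_mx d) v v = 0 -> v = 0.
Proof.
rewrite bform_diag => /psumr_eq0P v0; apply/rowP => a; rewrite mxE.
have /eqP := v0 (fun b _ => term_ge0 v b) a isT.
by rewrite -mulrA mulf_eq0 gt_eqF //= mulf_eq0 orbb => /eqP.
Qed.

Lemma compact_bform_diag_sphere : compact [set v | bform (diag_mx d) v v = 1].
Proof.
pose K a := 1 + (d 0 a)^-1.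
have closed_sphere : closed [set v | bform (diag_mx d) v v = 1].
  apply: (@preimage_closed _ _ (fun v => bform (diag_mx d) v v) [set x | x = 1]).
    by move=> v _; exact: continuous_bform.
  exact: closed_eq.
apply: (subclosed_compact closed_sphere
  (rV_compact (A := fun a => `[- K a, K a]%classic) _)).
  by move=> a; exact: segment_compact.
move=> v /= v1 a; rewrite in_itv /=.
have : d 0 a * (v ord0 a * v ord0 a) <= 1.
  rewrite -v1 bform_diag (bigD1 a) //= mulrA lerDl.
  by apply: sumr_ge0 => b _; apply: term_ge0.
have da := d_gt0 a; have := divff (lt0r_neq0 da); rewrite /K.
set k := (d 0 a)^-1; set y := v ord0 a => dk dy.
have k0 : 0 < k by rewrite invr_gt0.
apply/andP; split; nra.
Qed.

Lemma bform_diag_rayleigh_max (M : 'M[R]_n) : (0 < n)%N ->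
  exists c, bform (diag_mx d) c c = 1 /\
    forall w, bform M w w <= bform M c c * bform (diag_mx d) w w.
Proof.
move=> n_gt0; set D := diag_mx d; pose E := [set v | bform D v v = 1].
have normalize w : bform D w w != 0 -> E ((Num.sqrt (bform D w w))^-1 *: w).
  move=> w0; rewrite /E /= bform_scale exprVn sqr_sqrtr ?bform_diag_ge0 //.
  exact: mulVf.
have E0 : E !=set0.
  exists ((Num.sqrt (bform D (const_mx 1) (const_mx 1)))^-1 *: const_mx 1).
  apply: normalize; apply: contra_neq (@oner_neq0 R) => /bform_diag_eq0.
  by move/rowP/(_ (Ordinal n_gt0)); rewrite !mxE.
have [c Ec cmax] := EVT_max_rV E0 compact_bform_diag_sphere
  (continuous_subspaceT (fun v => continuous_bform M v)).
exists c; split; first by rewrite inE in Ec.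
move=> w; have [/bform_diag_eq0 ->|w0] := eqVneq (bform D w w) 0.
  by rewrite /bform !mul0mx !mxE mulr0.
have := cmax _ (mem_set (normalize w w0)).
rewrite bform_scale exprVn sqr_sqrtr ?bform_diag_ge0 //.
have w_gt0 : 0 < bform D w w by rewrite lt0r w0 bform_diag_ge0.
by rewrite ler_pdivrMl // mulrC.
Qed.

End DiagonalForm.

Lemma bform_delta A i : bform A (delta_mx 0 i) (delta_mx 0 i) = A i i.
Proof. by rewrite bform_delta_r -rowE mxE. Qed.

Lemma symmetrizable_eigenvalue_gt0 (J : 'M[R]_n) (d : 'rV[R]_n) (i : 'I_n) :
    (forall a, 0 < d 0 a) -> (forall a b, d 0 a * J a b = d 0 b * J b a) -> 0 < J i i ->
  exists2 lam, 0 < lam & eigenvalue J lam.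
Proof.
move=> d_gt0 dJ_sym Jii_gt0; set D := diag_mx d; set M := D *m J.
have M_sym : M^T = M.
  apply/matrixP => a b; rewrite /M /D mul_diag_mx !mxE.
  exact: esym (dJ_sym a b).
have [c [c1 cmax]] :=
  @bform_diag_rayleigh_max d d_gt0 M (leq_ltn_trans (leq0n i) (ltn_ord i)).
set m := bform M c c.
have m_gt0 : 0 < m.
  have Mii : M i i = J i i * d 0 i by rewrite /M /D mul_diag_mx mxE mulrC.
  have := cmax (delta_mx 0 i); rewrite !bform_delta Mii mxE eqxx mulr1n.
  by rewrite ler_pM2r // => /(lt_le_trans Jii_gt0).
have A_sym : (m *: D - M)^T = m *: D - M.
  by rewrite linearB linearZ /= tr_diag_mx M_sym.
have A_psd w : 0 <= bform (m *: D - M) w w by rewrite bform_linear_mx subr_ge0 cmax.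
have A_c : bform (m *: D - M) c c = 0 by rewrite bform_linear_mx c1 mulr1 subrr.
have := bform_kernel A_sym A_psd A_c.
rewrite mulmxBr -scalemxAr /M mulmxA => /eqP; rewrite subr_eq0 => /eqP eig.
exists m => //; apply/eigenvalueP; exists (c *m D); first by rewrite eig.
apply/eqP => cD0; move: c1; rewrite /bform cD0 mul0mx mxE => /eqP.
by rewrite eq_sym oner_eq0.
Qed.

End Rayleigh.

Local Close Scope classical_set_scope.

Lemma enum_val_setC {T : finType} (Z : {set T}) a : enum_val (A := ~: Z) a \notin Z.
Proof. by have := enum_valP a; rewrite inE. Qed.

Lemma eigenvalue_lift_zero_rows {K : fieldType} {T : finType} (P : {set T})
    (F : T -> T -> K) (lam : K) :
    (forall t q, t \notin P -> F t q = 0) -> lam != 0 ->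
    eigenvalue (\matrix_(a, b) F (enum_val (A := P) a) (enum_val (A := P) b)) lam ->
  eigenvalue (\matrix_(a, b) F (enum_val a) (enum_val b) : 'M[K]_(#|T|)) lam.
Proof.
move=> F0 lam0 /eigenvalueP [u uJ u0]; apply/eigenvalueP.
(* the lift is [t |-> lam^-1 * w t]; it agrees with [u] on [P] *)
pose w t := \sum_b u 0 b * F (enum_val b) t.
have w_P b : w (enum_val b) = lam * u 0 b.
  by have /rowP/(_ b) := uJ; rewrite !mxE => <-; apply: eq_bigr => b' _; rewrite mxE.
exists (\row_a (lam^-1 * w (enum_val a))); last first.
  apply: contraNneq u0 => V0; apply/eqP/rowP => b.
  by have /rowP/(_ (enum_rank (enum_val b))) := V0; rewrite !mxE enum_rankK w_P mulKf.
apply/rowP => q; rewrite !mxE mulVKf //.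
pose G t := lam^-1 * w t * F t (enum_val q).
transitivity (\sum_t G t).
  by rewrite (big_enum_val (A := xpredT) G); apply: eq_bigr => a _; rewrite !mxE.
rewrite (bigID (mem P)) /= [X in _ + X]big1 ?addr0 => [|t /F0 Ft0]; last first.
  by rewrite /G Ft0 mulr0.
rewrite (big_enum_val (A := mem P) G); apply: eq_bigr => b _.
by rewrite /G w_P mulKf.
Qed.

Section SigmoidKernel.
Context {R : realType} (gam del : R).

Definition sig_kernel (u : R) : R := 1 / (1 + expR (gam * u ^+ 2 - gam * del)).

Definition flux (u : R) : R := sig_kernel u * u.

Definition dflux (u : R) : R := sig_kernel u * (1 - 2 * gam * u ^+ 2 * (1 - sig_kernel u)).

Lemma sig_wE a b : sig_w gam del a b = sig_kernel (b - a).
Proof. by rewrite /sig_w /sig_kernel -sqrrN opprB. Qed.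

Let denom_gt0 u : 0 < 1 + expR (gam * u ^+ 2 - gam * del).
Proof. by rewrite ltr_wpDr ?expR_ge0. Qed.

Lemma sig_kernel_gt0 u : 0 < sig_kernel u.
Proof. by rewrite /sig_kernel div1r invr_gt0. Qed.

Lemma dflux_even u : dflux (- u) = dflux u.
Proof. by rewrite /dflux /sig_kernel !sqrrN. Qed.

Lemma is_derive_sig_kernel (u : R) :
  is_derive u 1 sig_kernel (- (2 * gam * u) * sig_kernel u * (1 - sig_kernel u)).
Proof.
pose q := gam \*: (id * id) - cst (gam * del) : R -> R.
have dq : is_derive u 1 q (gam * (2 * u)).
  have h := is_deriveB (is_deriveZ gam
    (is_deriveM (is_derive_id u 1) (is_derive_id u 1))) (is_derive_cst (gam * del) u 1).
  apply: (is_derive_eq h).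
  by rewrite /GRing.scale /=; ring.
have dg : is_derive u 1 (cst 1 + (expR \o q)) (expR (q u) * (gam * (2 * u))).
  have h := is_deriveD (is_derive_cst (1 : R) u 1) (is_derive1_comp (is_derive_expR (q u)) dq).
  by apply: (is_derive_eq h); rewrite add0r.
have -> : sig_kernel = fun v => ((cst 1 + (expR \o q)) v)^-1.
  by apply/funext => v; rewrite /sig_kernel div1r.
have denom_neq0 : (cst 1 + (expR \o q)) u != 0 := lt0r_neq0 (denom_gt0 u).
apply: (is_derive_eq (is_deriveV denom_neq0 dg)).
have -> : (cst 1 + (expR \o q)) u = 1 + expR (q u) by [].
by rewrite /GRing.scale /=; field; exact: denom_neq0.
Qed.

Lemma is_derive_flux (u : R) : is_derive u 1 flux (dflux u).
Proof.
apply: (is_derive_eq (is_deriveM (is_derive_sig_kernel u) (is_derive_id u 1))).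
by rewrite /dflux /GRing.scale /=; ring.
Qed.

Lemma dflux_lt0 u : 0 < gam -> 1 / (2 * gam) < (1 - sig_kernel u) * u ^+ 2 -> dflux u < 0.
Proof.
move=> gam_gt0; rewrite ltr_pdivrMr ?mulr_gt0 // => big.
by rewrite /dflux pmulr_rlt0 ?sig_kernel_gt0 // subr_lt0; lra.
Qed.

End SigmoidKernel.

Lemma is_derive_sum_fin {R : realType} {I : finType} {h : I -> R -> R} {x : R}
    {dh : I -> R} :
  (forall i, is_derive x 1 (h i) (dh i)) ->
  is_derive x 1 (fun t => \sum_i h i t) (\sum_i dh i).
Proof.
move=> Dh; rewrite -fct_sumE.
by elim/big_ind2 : _ => // [|] *; [exact: is_derive_cst | exact: is_deriveD].
Qed.

Lemma derive1_div_root {R : realType} {f g : R -> R} {x df dg : R} :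
    is_derive x 1 f df -> is_derive x 1 g dg -> f x = 0 -> g x != 0 ->
  derive1 (fun t => f t / g t) x = df / g x.
Proof.
move=> Df Dg fx0 gx0; rewrite derive1E.
have -> : (fun t => f t / g t) = f * (fun t => (g t)^-1) by [].
have D := is_deriveM Df (is_deriveV gx0 Dg).
rewrite (@derive_val _ _ _ _ _ _ _ D) fx0.
by rewrite /GRing.scale /= mul0r add0r mulrC.
Qed.

Definition laplacian {R : ringType} {T : finType} (c : T -> T -> R) (i j : T) : R :=
  \sum_k c i k * ((i == j)%:R - (k == j)%:R).

Section Laplacian.
Variables (R : ringType) (T : finType) (c : T -> T -> R).

Lemma laplacian_diag i : laplacian c i i = \sum_(k | k != i) c i k.
Proof.
rewrite /laplacian (bigD1 i) //= eqxx subrr mulr0 add0r.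
by apply: eq_bigr => k /negbTE ->; rewrite subr0 mulr1.
Qed.

Lemma laplacian_offdiag i j : i != j -> laplacian c i j = - c i j.
Proof.
move=> /negbTE ij; rewrite /laplacian ij (bigD1 j) //= eqxx sub0r mulrN1.
by rewrite big1 ?addr0 // => k /negbTE ->; rewrite subrr mulr0.
Qed.

Lemma laplacian_sym i j : (forall i k, c i k = c k i) -> laplacian c i j = laplacian c j i.
Proof.
move=> c_sym; have [->//|ij] := eqVneq i j.
by rewrite laplacian_offdiag // laplacian_offdiag 1?eq_sym // c_sym.
Qed.

End Laplacian.

Section SbcmJacobian.
Context {R : realType} {T : finType} (e : rel T) (Z : {set T}) (gam del : R).

Definition edge_fun (g : R -> R) (y : T -> R) (i k : T) : R := (e i k)%:R * g (y k - y i).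

Definition nbr_sum (g : R -> R) (y : T -> R) (i : T) : R := \sum_k edge_fun g y i k.

Lemma sbcm_fE y i : i \notin Z ->
  sbcm_f e Z gam del y i = nbr_sum (flux gam del) y i / nbr_sum (sig_kernel gam del) y i.
Proof.
move=> iP; rewrite /sbcm_f (negbTE iP); congr (_ / _); apply: eq_bigr => k _;
  by rewrite /infl /edge_fun sig_wE /flux; case: (e i k); rewrite ?mul1r ?mul0r.
Qed.

Lemma upd_id (y : T -> R) j : upd y j (y j) = y.
Proof. by apply/funext => k; rewrite /upd; case: eqP => [->|]. Qed.

Lemma is_derive_upd (y : T -> R) j k : is_derive (y j) 1 (fun t => upd y j t k) (k == j)%:R.
Proof.
rewrite /upd; case: eqP => _.
  exact: is_derive_id.
exact: is_derive_cst.
Qed.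

Lemma is_derive_nbr_sum {g dg : R -> R} (y : T -> R) i j :
    (forall u : R, is_derive u 1 g (dg u)) ->
  is_derive (y j) 1 (fun t => nbr_sum g (upd y j t) i) (- laplacian (edge_fun dg y) i j).
Proof.
move=> Dg.
have Dk k : is_derive (y j) 1 (fun t => edge_fun g (upd y j t) i k)
    ((e i k)%:R *: (dg (upd y j (y j) k - upd y j (y j) i) * ((k == j)%:R - (i == j)%:R))).
  exact: is_deriveZ (is_derive1_comp (Dg _)
    (is_deriveB (is_derive_upd y j k) (is_derive_upd y j i))).
rewrite /nbr_sum; apply: (is_derive_eq (is_derive_sum_fin Dk)); rewrite upd_id.
by rewrite /laplacian -sumrN; apply: eq_bigr => k _; rewrite /GRing.scale /= /edge_fun; ring.
Qed.

Lemma sbcm_partial_steady y i j :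
    i \notin Z -> nbr_sum (flux gam del) y i = 0 -> nbr_sum (sig_kernel gam del) y i != 0 ->
  sbcm_partial e Z gam del y i j =
    - laplacian (edge_fun (dflux gam del) y) i j / nbr_sum (sig_kernel gam del) y i.
Proof.
move=> iP N0 S0; rewrite /sbcm_partial.
have -> : (fun t => sbcm_f e Z gam del (upd y j t) i) = fun t =>
    nbr_sum (flux gam del) (upd y j t) i / nbr_sum (sig_kernel gam del) (upd y j t) i.
  by apply/funext => t; rewrite sbcm_fE.
by rewrite (derive1_div_root (is_derive_nbr_sum y i j (is_derive_flux gam del))
  (is_derive_nbr_sum y i j (is_derive_sig_kernel gam del))) ?upd_id.
Qed.

Lemma sbcm_partial_zealot y p q : p \in Z -> sbcm_partial e Z gam del y p q = 0.
Proof.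
move=> pZ; rewrite /sbcm_partial /sbcm_f pZ.
by rewrite derive1E derive_cst.
Qed.

End SbcmJacobian.

Section SteadyState.
Context {R : realType} {T : finType} {e : rel T} {Z : {set T}} {gam del : R} {x : T -> R}.
Hypotheses (e_sym : symmetric e) (e_irr : irreflexive e)
  (has_nbr : forall i, i \notin Z -> exists j, e i j)
  (steady : steady_state e Z gam del x).

Local Notation S := (nbr_sum e (sig_kernel gam del) x).
Local Notation c := (edge_fun e (dflux gam del) x).

Lemma nbr_weight_gt0 p : p \notin Z -> 0 < S p.
Proof.
move=> pP; have [j pj] := has_nbr p pP.
rewrite /nbr_sum (bigD1 j) //= {1}/edge_fun pj mul1r ltr_pwDl ?sig_kernel_gt0 //.
by apply: sumr_ge0 => k _; rewrite mulr_ge0 ?ler0n ?ltW ?sig_kernel_gt0.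
Qed.

Lemma flux_sum_eq0 p : p \notin Z -> nbr_sum e (flux gam del) x p = 0.
Proof.
move=> pP; have /eqP := steady p.
by rewrite sbcm_fE // mulf_eq0 invr_eq0 (gt_eqF (nbr_weight_gt0 _ pP)) orbF => /eqP.
Qed.

Lemma sbcm_JPE a b :
  sbcm_JP e Z gam del x a b = - laplacian c (enum_val a) (enum_val b) / S (enum_val a).
Proof.
by rewrite mxE sbcm_partial_steady ?flux_sum_eq0 ?lt0r_neq0 ?nbr_weight_gt0 ?enum_val_setC.
Qed.

Lemma sbcm_JP_symmetrizable a b :
  S (enum_val a) * sbcm_JP e Z gam del x a b = S (enum_val b) * sbcm_JP e Z gam del x b a.
Proof.
rewrite !sbcm_JPE ![S _ * _]mulrC !divfK ?lt0r_neq0 ?nbr_weight_gt0 ?enum_val_setC //.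
congr (- _); apply: laplacian_sym => i k.
by rewrite /edge_fun e_sym -dflux_even opprB.
Qed.

Lemma sbcm_JP_diag_gt0 a : 0 < gam ->
    (forall j, e (enum_val a) j -> 1 / (2 * gam) <
       (1 - sig_w gam del (x (enum_val a)) (x j)) * (x j - x (enum_val a)) ^+ 2) ->
  0 < sbcm_JP e Z gam del x a a.
Proof.
move=> gam_gt0 hyp.
rewrite sbcm_JPE laplacian_diag divr_gt0 ?nbr_weight_gt0 ?enum_val_setC //.
have c_lt0 k : e (enum_val a) k -> c (enum_val a) k < 0.
  by move=> ak; rewrite /edge_fun ak mul1r dflux_lt0 // -sig_wE hyp.
have [j aj] := has_nbr _ (enum_val_setC Z a).
have ja : j != enum_val a by apply: contraTneq aj => ->; rewrite e_irr.
have c_le0 k : c (enum_val a) k <= 0.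
  case: (boolP (e (enum_val a) k)) => [/c_lt0/ltW //|/negbTE nak].
  by rewrite /edge_fun nak mul0r.
rewrite oppr_gt0 (bigD1 j) //= -[ltRHS]addr0 ltr_leD ?c_lt0 //.
by apply: sumr_le0 => k _; apply: c_le0.
Qed.

End SteadyState.

Theorem proposition1 (R : realType) (T : finType) (e : rel T) (Z : {set T})
  (gam del : R) (x : T -> R) :
  symmetric e -> irreflexive e ->
  (forall i, i \notin Z -> exists j, e i j) ->
  0 < gam -> 0 <= del ->
  steady_state e Z gam del x ->
  (exists i, i \notin Z /\
     forall j, e i j ->
       (1 - sig_w gam del (x i) (x j)) * (x j - x i) ^+ 2 > 1 / (2 * gam)) ->
  (exists2 lam : R, 0 < lam & eigenvalue (sbcm_JP e Z gam del x) lam) /\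
  (exists2 lam : R, 0 < lam & eigenvalue (sbcm_J e Z gam del x) lam).
Proof.
move=> e_sym e_irr has_nbr gam_gt0 _ steady [i [iZ hyp]].
have iP : i \in ~: Z by rewrite inE.
pose d := \row_a nbr_sum e (sig_kernel gam del) x (enum_val (A := ~: Z) a).
have dE a : d 0 a = nbr_sum e (sig_kernel gam del) x (enum_val a) by rewrite mxE.
have [lam lam_gt0 eigJP] : exists2 lam, 0 < lam & eigenvalue (sbcm_JP e Z gam del x) lam.
  apply: (symmetrizable_eigenvalue_gt0 _ d (enum_rank_in iP i)).
  - by move=> a; rewrite dE (nbr_weight_gt0 has_nbr) ?enum_val_setC.
  - by move=> a b; rewrite !dE (sbcm_JP_symmetrizable e_sym has_nbr steady).
  - by apply: (sbcm_JP_diag_gt0 e_irr has_nbr steady) => //; rewrite enum_rankK_in.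
split; exists lam => //.
apply: (eigenvalue_lift_zero_rows (~: Z) (sbcm_partial e Z gam del x)) => //.
- by move=> t q; rewrite inE negbK; exact: sbcm_partial_zealot.
- exact: lt0r_neq0.
Qed.
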